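(* Let $P$ and $Q$ be rhombuses whose vertices all lie on the integer lattice $\mathbb{Z}^2$, and suppose that $P$ and $Q$ form an amicable pair, i.e. the area of $P$ equals the perimeter of $Q$ and the area of $Q$ equals the perimeter of $P$. Then $P$ and $Q$ are both equable, i.e. the area of each equals its own perimeter.
   Context: A polygon is a lattice polygon if all its vertices lie on the integer lattice $\mathbb{Z}^2$. A polygon is equable if its area equals its perimeter. Two polygons form an amicable pair if the area of each equals the perimeter of the other; an equable polygon paired with itself is allowed as an (trivial) amicable pair, and $P$, $Q$ need not be distinct. *)

From Stdlib Require Import Reals ZArith List Lra.
Import ListNotations.
Open Scope R_scope.

Definition lpoint : Type := (Z * Z)%type.

Definition px (p : lpoint) : R := IZR (fst p).
Definition py (p : lpoint) : R := IZR (snd p).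

Definition dist (p q : lpoint) : R :=
  sqrt ((px q - px p) ^ 2 + (py q - py p) ^ 2).

(** A polygon is given by its list of vertices in cyclic order.
    Edges join consecutive vertices, and the last vertex to the first. *)
Fixpoint edges_aux (first : lpoint) (l : list lpoint) : list (lpoint * lpoint) :=
  match l with
  | [] => []
  | [p] => [(p, first)]
  | p :: ((q :: _) as t) => (p, q) :: edges_aux first t
  end.

Definition edges (l : list lpoint) : list (lpoint * lpoint) :=
  match l with
  | [] => []
  | p :: _ => edges_aux p l
  end.

Definition perimeter (l : list lpoint) : R :=
  fold_right (fun e acc => dist (fst e) (snd e) + acc) 0 (edges l).

(** Area by the shoelace formula (correct for simple polygons, in particular
    for rhombuses). *)
Definition area (l : list lpoint) : R :=
  Rabs (fold_right (fun e acc => px (fst e) * py (snd e) - px (snd e) * py (fst e) + acc)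
          0 (edges l)) / 2.

(** A (non-degenerate) rhombus with vertices A, B, C, D in cyclic order:
    a parallelogram (B - A = C - D) with two adjacent sides of equal length
    (hence all four sides equal) and non-collinear adjacent sides. *)
Definition is_rhombus (A B C D : lpoint) : Prop :=
  (fst B - fst A = fst C - fst D)%Z /\ (snd B - snd A = snd C - snd D)%Z /\
  dist A B = dist A D /\
  ((fst B - fst A) * (snd D - snd A) - (snd B - snd A) * (fst D - fst A) <> 0)%Z.

Definition lattice_rhombus (P : list lpoint) : Prop :=
  exists A B C D, P = [A; B; C; D] /\ is_rhombus A B C D.

Definition equable (P : list lpoint) : Prop := area P = perimeter P.

Definition amicable (P Q : list lpoint) : Prop :=
  area P = perimeter Q /\ area Q = perimeter P.

(* A lattice rhombus with side vectors u, v has perimeter 4 sqrt n,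
   where n = |u|^2 = |v|^2, and area |m|, where m = u x v; by Lagrange's identity
   m^2 + (u.v)^2 = n^2.  For amicable P, Q this gives m_P^2 = 16 n_Q and
   m_Q^2 = 16 n_P, and equability of both is equivalent to n_P = n_Q.  If, say,
   n_Q < n_P, write 16 n_Q = n_P^2 - (u_P.v_P)^2 = k (2 n_P - k) and similarly
   16 n_P = j (2 n_Q - j); size considerations force k <= 15 and j <= 128, and
   eliminating n_P leaves finitely many candidates for n_Q, none of which
   survives the remaining constraints (checked by computation). *)

From Pilot Require Import Defs.
From Stdlib Require Import Reals ZArith List Lia Lra.
Import ListNotations.
Open Scope R_scope.

Definition vec (p q : lpoint) : Z * Z := (fst q - fst p, snd q - snd p)%Z.
Definition sqnorm (u : Z * Z) : Z := (fst u * fst u + snd u * snd u)%Z.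
Definition cross (u v : Z * Z) : Z := (fst u * snd v - snd u * fst v)%Z.
Definition dot (u v : Z * Z) : Z := (fst u * fst v + snd u * snd v)%Z.

Lemma sqnorm_nonneg (u : Z * Z) : (0 <= sqnorm u)%Z.
Proof. unfold sqnorm. nia. Qed.

Lemma lagrange_identity (u v : Z * Z) :
  (cross u v * cross u v + dot u v * dot u v = sqnorm u * sqnorm v)%Z.
Proof. unfold cross, dot, sqnorm. ring. Qed.

Lemma dist_sqnorm (p q : lpoint) : Defs.dist p q = sqrt (IZR (sqnorm (vec p q))).
Proof.
  unfold Defs.dist, px, py, sqnorm, vec; simpl.
  rewrite plus_IZR, !mult_IZR, !minus_IZR. apply f_equal. ring.
Qed.

Lemma sqnorm_vec_sym (p q : lpoint) : sqnorm (vec p q) = sqnorm (vec q p).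
Proof. unfold sqnorm, vec; simpl. ring. Qed.

Lemma quadrilateral_perimeter (A B C D : lpoint) :
  perimeter [A; B; C; D] = Defs.dist A B + Defs.dist B C + Defs.dist C D + Defs.dist D A.
Proof. unfold perimeter; simpl. ring. Qed.

Lemma quadrilateral_area (A B C D : lpoint) :
  area [A; B; C; D] = Rabs (IZR (cross (vec A C) (vec B D))) / 2.
Proof.
  unfold area, cross, vec, px, py; simpl.
  rewrite minus_IZR, !mult_IZR, !minus_IZR. apply (f_equal (fun r => Rabs r / 2)). ring.
Qed.

Section Rhombus.
Variables A B C D : lpoint.
Hypothesis rhombus : is_rhombus A B C D.

Lemma rhombus_opposite_vertex :
  C = (fst B + fst D - fst A, snd B + snd D - snd A)%Z.
Proof.
  destruct rhombus as (E1 & E2 & _). destruct C as [c1 c2]; simpl in *. f_equal; lia.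
Qed.

Lemma rhombus_sqnorm_sides : sqnorm (vec A B) = sqnorm (vec A D).
Proof.
  destruct rhombus as (_ & _ & sides & _). rewrite !dist_sqnorm in sides.
  apply eq_IZR, sqrt_inj; try apply IZR_le, sqnorm_nonneg. exact sides.
Qed.

Lemma rhombus_vec_BC : vec B C = vec A D.
Proof. rewrite rhombus_opposite_vertex. unfold vec; simpl. f_equal; ring. Qed.

Lemma rhombus_vec_CD : vec C D = vec B A.
Proof. rewrite rhombus_opposite_vertex. unfold vec; simpl. f_equal; ring. Qed.

Lemma rhombus_perimeter : perimeter [A; B; C; D] = 4 * sqrt (IZR (sqnorm (vec A B))).
Proof.
  rewrite quadrilateral_perimeter, !dist_sqnorm, rhombus_vec_BC, rhombus_vec_CD,
    (sqnorm_vec_sym B A), (sqnorm_vec_sym D A), <- rhombus_sqnorm_sides.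
  ring.
Qed.

Lemma rhombus_cross_diagonals :
  cross (vec A C) (vec B D) = (2 * cross (vec A B) (vec A D))%Z.
Proof. rewrite rhombus_opposite_vertex. unfold cross, vec; cbn [fst snd]. ring. Qed.

Lemma rhombus_area : area [A; B; C; D] = IZR (Z.abs (cross (vec A B) (vec A D))).
Proof.
  rewrite quadrilateral_area, rhombus_cross_diagonals, mult_IZR, Rabs_mult, (Rabs_right 2)
    by lra.
  rewrite Rabs_Zabs. lra.
Qed.

End Rhombus.

Lemma lattice_rhombus_measures (P : list lpoint) : lattice_rhombus P ->
  exists m d n : Z, m <> 0%Z /\ (0 <= n)%Z /\ (m * m + d * d = n * n)%Z /\
    area P = IZR (Z.abs m) /\ perimeter P = 4 * sqrt (IZR n).
Proof.
  intros (A & B & C & D & -> & rhombus).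
  pose proof rhombus as (_ & _ & _ & nondegenerate).
  exists (cross (vec A B) (vec A D)), (dot (vec A B) (vec A D)), (sqnorm (vec A B)).
  repeat split.
  - exact nondegenerate.
  - apply sqnorm_nonneg.
  - rewrite lagrange_identity, <- (rhombus_sqnorm_sides A B C D rhombus). reflexivity.
  - apply rhombus_area, rhombus.
  - apply rhombus_perimeter, rhombus.
Qed.

Lemma abs_eq_4sqrt_sqr (m n : Z) :
  (0 <= n)%Z -> IZR (Z.abs m) = 4 * sqrt (IZR n) -> (m * m = 16 * n)%Z.
Proof.
  intros n_ge0 E. apply eq_IZR.
  rewrite <- Z.abs_square, !mult_IZR, E.
  replace (4 * sqrt (IZR n) * (4 * sqrt (IZR n))) with (16 * (sqrt (IZR n) * sqrt (IZR n)))
    by ring.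
  rewrite sqrt_sqrt; [reflexivity | apply IZR_le, n_ge0].
Qed.

Section Arithmetic.
Local Open Scope Z_scope.

Lemma sqr_gap_factor (c N a : Z) :
  0 < c -> 0 < N -> c + a * a = N * N -> exists k, 1 <= k <= N /\ c = k * (2 * N - k).
Proof.
  intros c_gt0 N_gt0 E.
  assert (abs_a_lt : Z.abs a < N).
  { rewrite <- Z.abs_square in E. nia. }
  exists (N - Z.abs a). split; [lia|].
  rewrite <- Z.abs_square in E. nia.
Qed.

Definition is_square_b (c : Z) : bool := Z.sqrt c * Z.sqrt c =? c.

Lemma is_square_b_sqr (x : Z) : is_square_b (x * x) = true.
Proof.
  unfold is_square_b. apply Z.eqb_eq.
  rewrite <- (Z.abs_square x), Z.sqrt_square; [reflexivity | apply Z.abs_nonneg].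
Qed.

(* Eliminating N from [16 M = k (2 N - k)] and [16 N = j (2 M - j)] gives
   [M (2 j k - 128) = k (j^2 + 8 k)], so the pair (k, j) determines M. *)
Definition gap_pair_feasible (k j : Z) : bool :=
  let d := 2 * j * k - 128 in
  let c := k * (j * j + 8 * k) in
  (0 <? d) && (c mod d =? 0) &&
  (let M := c / d in (j <=? M) && (16 * M <? 2 * j * M - j * j) && is_square_b (16 * M)).

Lemma gap_pair_feasibleP (k j M x : Z) :
  0 < k -> 0 < M -> M * (2 * j * k - 128) = k * (j * j + 8 * k) ->
  j <= M -> 16 * M < 2 * j * M - j * j -> x * x = 16 * M ->
  gap_pair_feasible k j = true.
Proof.
  intros k_gt0 M_gt0 E j_le M_lt sq.
  assert (d_gt0 : 0 < 2 * j * k - 128) by nia.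
  unfold gap_pair_feasible. rewrite <- E, Z.mod_mul, Z.div_mul by lia.
  rewrite (proj2 (Z.ltb_lt _ _) d_gt0), Z.eqb_refl, (proj2 (Z.leb_le _ _) j_le),
    (proj2 (Z.ltb_lt _ _) M_lt), <- sq, is_square_b_sqr.
  reflexivity.
Qed.

Lemma in_Z_range (k : Z) (a n : nat) :
  Z.of_nat a <= k < Z.of_nat (a + n) -> In k (map Z.of_nat (seq a n)).
Proof.
  intros. apply in_map_iff. exists (Z.to_nat k). split; [lia | apply in_seq; lia].
Qed.

Lemma no_feasible_gap_pair (k j : Z) :
  1 <= k <= 15 -> 1 <= j <= 128 -> gap_pair_feasible k j = false.
Proof.
  intros k_range j_range.
  assert (all_pairs : forallb (fun k => forallb (fun j => negb (gap_pair_feasible k j))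
            (map Z.of_nat (seq 1 128))) (map Z.of_nat (seq 1 15)) = true)
    by now vm_compute.
  rewrite forallb_forall in all_pairs.
  specialize (all_pairs k (in_Z_range k 1 15 ltac:(lia))).
  rewrite forallb_forall in all_pairs.
  apply Bool.negb_true_iff, all_pairs, in_Z_range. lia.
Qed.

Lemma no_unequal_amicable_sides (M N x a b : Z) :
  0 < M < N -> x * x = 16 * M -> 16 * M + a * a = N * N -> 16 * N + b * b = M * M -> False.
Proof.
  intros M_range sqM EN EM.
  destruct (sqr_gap_factor (16 * M) N a) as (k & k_range & Ek); [lia..|].
  destruct (sqr_gap_factor (16 * N) M b) as (j & j_range & Ej); [lia..|].
  clear a b EN EM.
  (* k < 16 since 2 N - k >= N > M; then 16 M >= 2 N - 1, so j M <= 16 N <= 128 M. *)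
  assert (k_le : k <= 15).
  { destruct (Z_le_gt_dec k 15) as [|k_gt]; [assumption | exfalso].
    assert (0 <= (k - 16) * (2 * N - k)) by (apply Z.mul_nonneg_nonneg; lia).
    lia. }
  assert (N_le : N <= 8 * M).
  { assert (0 <= (k - 1) * (2 * N - 1 - k)) by (apply Z.mul_nonneg_nonneg; lia). lia. }
  assert (j_le : j <= 128).
  { assert (0 <= j * (M - j)) by (apply Z.mul_nonneg_nonneg; lia).
    destruct (Z_le_gt_dec j 128) as [|j_gt]; [assumption | exfalso].
    assert (0 <= (j - 129) * M) by (apply Z.mul_nonneg_nonneg; lia).
    lia. }
  assert (elim_N : M * (2 * j * k - 128) = k * (j * j + 8 * k)).
  { assert (k * (16 * N) = k * (j * (2 * M - j))) by (f_equal; exact Ej). lia. }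
  assert (feasible := gap_pair_feasibleP k j M x ltac:(lia) ltac:(lia) elim_N
                        ltac:(lia) ltac:(lia) sqM).
  rewrite no_feasible_gap_pair in feasible; [discriminate | lia..].
Qed.

Lemma amicable_pythagorean_eq (m d n m' d' n' : Z) : m <> 0 -> m' <> 0 ->
  m * m + d * d = n * n -> m' * m' + d' * d' = n' * n' ->
  m * m = 16 * n' -> m' * m' = 16 * n -> n = n'.
Proof.
  intros m_nz m'_nz pyth pyth' sq sq'.
  assert (n_gt0 : 0 < n) by nia.
  assert (n'_gt0 : 0 < n') by nia.
  destruct (Z.lt_total n n') as [lt | [eq | gt]]; [exfalso | exact eq | exfalso].
  - apply (no_unequal_amicable_sides n n' m' d' d); lia.
  - apply (no_unequal_amicable_sides n' n m d d'); lia.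
Qed.

End Arithmetic.

Theorem mainTheorem1 (P Q : list lpoint) :
  lattice_rhombus P -> lattice_rhombus Q -> amicable P Q ->
  equable P /\ equable Q.
Proof.
  intros HP HQ [areaP_perQ areaQ_perP].
  destruct (lattice_rhombus_measures P HP)
    as (mP & dP & nP & mP_nz & nP_ge0 & pythP & areaP & perP).
  destruct (lattice_rhombus_measures Q HQ)
    as (mQ & dQ & nQ & mQ_nz & nQ_ge0 & pythQ & areaQ & perQ).
  assert (same_side : nP = nQ).
  { apply (amicable_pythagorean_eq mP dP nP mQ dQ nQ); trivial;
      apply abs_eq_4sqrt_sqr; congruence. }
  unfold equable. rewrite areaP_perQ, areaQ_perP, perP, perQ, same_side.
  split; reflexivity.
Qed.
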